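(* Let $P$ be the uniform distribution on $[0,1]$, let $\beta=\{\frac14,\frac12\}$, and let $V_n$ ($n\geq2$) be the $n$th conditional quantization error of $P$ with respect to $\beta$, with $V_\infty=\lim_{n\to\infty}V_n$. Then the $1$-dimensional conditional quantization coefficient exists as a finite positive number and equals $\frac1{12}$, i.e. $\lim_{n\to\infty}n^2(V_n-V_\infty)=\frac1{12}$.
   Context: For a Borel probability measure $P$ on $\mathbb{R}$ and a finite set $\beta\subset\mathbb{R}$ with $\mathrm{card}(\beta)=r$, for $n\geq r$ the $n$th conditional quantization error is $V_n=\inf\{\int\min_{a\in\alpha\cup\beta}(x-a)^2\,dP(x):\alpha\subset\mathbb{R},\ \mathrm{card}(\alpha)\leq n-r\}$. *)

From Stdlib Require Import Reals Lra List.
From Coquelicot Require Import Coquelicot.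
Open Scope R_scope.

Definition min_sqdist (x b0 : R) (l : list R) : R :=
  fold_right (fun a m => Rmin ((x - a) ^ 2) m) ((x - b0) ^ 2) l.

(* Expectation with respect to the uniform distribution P on [0,1]
   (the integrands used below are continuous, so the Riemann integral
   coincides with the Lebesgue integral w.r.t. P). *)
Definition unif01_expect (f : R -> R) : R := RInt f 0 1.

Definition beta_list : list R := 1/4 :: 1/2 :: nil.

Definition cond_cost (alpha : list R) : R :=
  unif01_expect (fun x => min_sqdist x (1/4) (alpha ++ (1/2 :: nil))).

(* n-th conditional quantization error: infimum over alpha with
   card(alpha) <= n - r (a finite set with at most k points is the set of
   elements of a list of length <= k). *)
Definition Vn (n : nat) : R :=
  real (Glb_Rbar (fun v => exists alpha : list R,
                    (length alpha <= n - length beta_list)%nat /\ v = cond_cost alpha)).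

From Stdlib Require Import Reals Lra List Psatz.
From Coquelicot Require Import Coquelicot.
Open Scope R_scope.

(* A single point costs at least l^3/12 on an interval of length l, with
   equality at its midpoint.  The Voronoi cells of k points cut [0,1] into k
   intervals, so by convexity of t |-> t^3 any k points cost at least
   1/(12 k^2), and the midpoints of k equal cells achieve this.  Since V_n
   uses at most n points and at least n - 2 free ones,
   1/(12 n^2) <= V_n <= 1/(12 (n-2)^2); hence V_n -> 0 and n^2 V_n -> 1/12. *)

Lemma continuous_Rmin_fun (f g : R -> R) (x : R) :
  continuous f x -> continuous g x -> continuous (fun y => Rmin (f y) (g y)) x.
Proof.
  intros Hf%continuity_pt_filterlim Hg%continuity_pt_filterlim.
  apply continuity_pt_filterlim.
  apply continuity_pt_ext with (f := fun y => (f y + g y - Rabs (f y - g y)) * / 2).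
  { intros y. unfold Rmin. destruct (Rle_dec (f y) (g y)).
    - rewrite Rabs_left1 by lra. lra.
    - rewrite Rabs_right by lra. lra. }
  apply continuity_pt_mult; [|apply continuity_pt_const; intros ??; reflexivity].
  apply continuity_pt_minus; [now apply continuity_pt_plus|].
  apply (continuity_pt_comp (fun y => f y - g y) Rabs);
    [now apply continuity_pt_minus | apply Rcontinuity_abs].
Qed.

Lemma continuous_sq_shift (a x : R) : continuous (fun y => (y - a) ^ 2) x.
Proof. apply (@ex_derive_continuous R_AbsRing R_NormedModule). auto_derive. auto. Qed.

Lemma ex_RInt_sq_shift (a c d : R) : ex_RInt (fun x => (x - a) ^ 2) c d.
Proof. apply (@ex_RInt_continuous R_CompleteNormedModule). intros; apply continuous_sq_shift. Qed.

Lemma RInt_sq_shift (a c d : R) :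
  RInt (fun x => (x - a) ^ 2) c d = ((d - a) ^ 3 - (c - a) ^ 3) / 3.
Proof.
  apply is_RInt_unique.
  replace (((d - a) ^ 3 - (c - a) ^ 3) / 3)
    with (minus ((fun x => (x - a) ^ 3 / 3) d) ((fun x => (x - a) ^ 3 / 3) c))
    by (unfold minus, plus, opp; simpl; field).
  apply (@is_RInt_derive R_CompleteNormedModule (fun x => (x - a) ^ 3 / 3)).
  - intros x _. auto_derive; [auto | field].
  - intros x _. apply continuous_sq_shift.
Qed.

Lemma RInt_sq_shift_ge (a c d : R) :
  c <= d -> (d - c) ^ 3 / 12 <= RInt (fun x => (x - a) ^ 2) c d.
Proof.
  intros Hcd. rewrite RInt_sq_shift.
  assert (Hfactor : 4 * ((d - a) ^ 3 - (c - a) ^ 3) - (d - c) ^ 3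
                    = 3 * (d - c) * ((d - a) + (c - a)) ^ 2) by ring.
  assert (0 <= 3 * (d - c) * ((d - a) + (c - a)) ^ 2)
    by (apply Rmult_le_pos; [lra | apply pow2_ge_0]).
  lra.
Qed.

Lemma RInt_sq_midpoint (c d : R) :
  RInt (fun x => (x - (c + d) / 2) ^ 2) c d = (d - c) ^ 3 / 12.
Proof. rewrite RInt_sq_shift. simpl. field. Qed.

Lemma min_sqdist_le (x b0 : R) (l : list R) (y : R) :
  In y (b0 :: l) -> min_sqdist x b0 l <= (x - y) ^ 2.
Proof.
  induction l as [|a l IH]; simpl.
  - intros [<- | []]. lra.
  - intros [<- | [<- | Hy]].
    + eapply Rle_trans; [apply Rmin_r | apply IH; now left].
    + apply Rmin_l.
    + eapply Rle_trans; [apply Rmin_r | apply IH; now right].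
Qed.

Lemma min_sqdist_attained (x b0 : R) (l : list R) :
  exists y, In y (b0 :: l) /\ min_sqdist x b0 l = (x - y) ^ 2.
Proof.
  induction l as [|a l [y [Hy Hmin]]]; simpl.
  - exists b0. auto.
  - fold (min_sqdist x b0 l). rewrite Hmin. unfold Rmin.
    destruct (Rle_dec _ _).
    + exists a. simpl. auto.
    + exists y. split; [destruct Hy; simpl; auto | reflexivity].
Qed.

Lemma continuous_min_sqdist (b0 : R) (l : list R) (x : R) :
  continuous (fun y => min_sqdist y b0 l) x.
Proof.
  induction l as [|a l IH]; simpl.
  - apply continuous_sq_shift.
  - apply (continuous_Rmin_fun (fun y => (y - a) ^ 2)); [apply continuous_sq_shift | exact IH].
Qed.

Lemma ex_RInt_min_sqdist (b0 : R) (l : list R) (c d : R) :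
  ex_RInt (fun x => min_sqdist x b0 l) c d.
Proof.
  apply (@ex_RInt_continuous R_CompleteNormedModule).
  intros; apply continuous_min_sqdist.
Qed.

Lemma RInt_min_sqdist_Chasles (b0 : R) (l : list R) (c m d : R) :
  RInt (fun x => min_sqdist x b0 l) c d
  = RInt (fun x => min_sqdist x b0 l) c m + RInt (fun x => min_sqdist x b0 l) m d.
Proof.
  symmetry.
  exact (RInt_Chasles _ c m d (ex_RInt_min_sqdist _ _ _ _) (ex_RInt_min_sqdist _ _ _ _)).
Qed.

Lemma RInt_min_sqdist_le_point (a b0 : R) (l : list R) (c d : R) :
  c <= d -> In a (b0 :: l) ->
  RInt (fun x => min_sqdist x b0 l) c d <= RInt (fun x => (x - a) ^ 2) c d.
Proof.
  intros Hcd Ha.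
  apply RInt_le; auto using ex_RInt_min_sqdist, ex_RInt_sq_shift.
  intros x _. now apply min_sqdist_le.
Qed.

Lemma list_max_spec (b0 : R) (l : list R) :
  exists a, In a (b0 :: l) /\ forall y, In y (b0 :: l) -> y <= a.
Proof.
  induction l as [|z l [m [Hm Hle]]].
  - exists b0. split; [now left|]. intros y [<- | []]. lra.
  - exists (Rmax z m). split.
    + apply Rmax_case; [simpl; auto | destruct Hm; simpl; auto].
    + intros y [<- | [<- | Hy]].
      * eapply Rle_trans; [apply Hle; now left | apply Rmax_r].
      * apply Rmax_l.
      * eapply Rle_trans; [apply Hle; now right | apply Rmax_r].
Qed.

Lemma remove_one_spec (L : list R) (a : R) :
  In a L -> exists L', S (length L') = length L /\ incl L' L /\
    forall y, In y L -> y = a \/ In y L'.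
Proof.
  intros Ha. destruct (in_split a L Ha) as [l1 [l2 ->]].
  exists (l1 ++ l2). rewrite !length_app. simpl. repeat split; [lia | |].
  - intros y Hy. rewrite in_app_iff in *. simpl. tauto.
  - intros y Hy. rewrite in_app_iff in *. simpl in Hy.
    destruct Hy as [Hy | [<- | Hy]]; auto.
Qed.

Lemma split_point (c d p : R) : c <= d ->
  exists m, c <= m <= d /\ (forall x, c < x < m -> x <= p) /\ (forall x, m < x < d -> p <= x).
Proof.
  intros Hcd. exists (Rmax c (Rmin p d)).
  unfold Rmax, Rmin. repeat destruct (Rle_dec _ _); repeat split; intros; lra.
Qed.

Section Peeling.

Variables (a b : R) (b0 b0' : R) (l l' : list R).
Hypothesis (Hba : b <= a).

Lemma min_sqdist_peel_left (x : R) :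
  In b (b0' :: l') -> (forall y, In y (b0 :: l) -> y = a \/ In y (b0' :: l')) ->
  x <= (a + b) / 2 -> min_sqdist x b0' l' <= min_sqdist x b0 l.
Proof.
  intros Hb Hcover Hx.
  destruct (min_sqdist_attained x b0 l) as [e [He ->]].
  destruct (Hcover e He) as [-> | He'].
  - eapply Rle_trans; [apply (min_sqdist_le _ _ _ _ Hb) | nra].
  - now apply min_sqdist_le.
Qed.

Lemma min_sqdist_peel_right (x : R) :
  (forall y, In y (b0 :: l) -> y = a \/ y <= b) ->
  (a + b) / 2 <= x -> (x - a) ^ 2 <= min_sqdist x b0 l.
Proof.
  intros Hcover Hx.
  destruct (min_sqdist_attained x b0 l) as [e [He ->]].
  destruct (Hcover e He) as [-> | Heb]; nra.
Qed.

End Peeling.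

(* Optimal cost of K + 1 points on length u + v against K points on u plus one
   on v; equality iff u = K v. *)
Lemma cube_split_ineq (u v K : R) : 0 <= u -> 0 <= v -> 0 < K ->
  (u + v) ^ 3 / (12 * (K + 1) ^ 2) <= u ^ 3 / (12 * K ^ 2) + v ^ 3 / 12.
Proof.
  intros Hu Hv HK.
  assert (0 <= (u - K * v) ^ 2 * ((2 * K + 1) * u + (K ^ 2 + 2 * K) * v))
    by (apply Rmult_le_pos; [apply pow2_ge_0 | nra]).
  assert (0 < K ^ 2) by nra.
  assert (0 < (K + 1) ^ 2) by nra.
  apply Rmult_le_reg_r with (r := 12 * K ^ 2 * (K + 1) ^ 2); [nra|].
  replace ((u + v) ^ 3 / (12 * (K + 1) ^ 2) * (12 * K ^ 2 * (K + 1) ^ 2))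
    with (K ^ 2 * (u + v) ^ 3) by (field; lra).
  replace ((u ^ 3 / (12 * K ^ 2) + v ^ 3 / 12) * (12 * K ^ 2 * (K + 1) ^ 2))
    with ((K + 1) ^ 2 * u ^ 3 + K ^ 2 * (K + 1) ^ 2 * v ^ 3) by (field; lra).
  nra.
Qed.

(* Peel off the largest point a: left of the midpoint between a and the next
   largest point b, a is never strictly closest; right of it, a always is. *)
Lemma RInt_min_sqdist_ge (b0 : R) (l : list R) (c d : R) : c <= d ->
  (d - c) ^ 3 / (12 * (INR (length l) + 1) ^ 2) <= RInt (fun x => min_sqdist x b0 l) c d.
Proof.
  remember (length l) as N eqn:HN. revert b0 l HN c d.
  induction N as [|N IH]; intros b0 l HN c d Hcd.
  - destruct l; [|discriminate]. simpl INR.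
    replace ((0 + 1) ^ 2) with 1 by ring. rewrite Rmult_1_r.
    now apply RInt_sq_shift_ge.
  - destruct (list_max_spec b0 l) as [a [Ha Hamax]].
    destruct (remove_one_spec _ _ Ha) as [[|b0' l'] [Hlen [Hincl Hcover]]];
      simpl in Hlen; [lia|].
    destruct (list_max_spec b0' l') as [b [Hb Hbmax]].
    assert (Hba : b <= a) by auto.
    destruct (split_point c d ((a + b) / 2) Hcd) as [m [Hm [Hleft Hright]]].
    assert (Hl : RInt (fun x => min_sqdist x b0' l') c m <= RInt (fun x => min_sqdist x b0 l) c m).
    { apply RInt_le; [lra | apply ex_RInt_min_sqdist | apply ex_RInt_min_sqdist |].
      intros x Hx. apply (min_sqdist_peel_left a b); auto. }
    assert (Hr : RInt (fun x => (x - a) ^ 2) m d <= RInt (fun x => min_sqdist x b0 l) m d).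
    { apply RInt_le; [lra | apply ex_RInt_sq_shift | apply ex_RInt_min_sqdist |].
      intros x Hx. apply (min_sqdist_peel_right a b); auto.
      intros y Hy. destruct (Hcover y Hy); auto. }
    assert (Hcost_l := IH b0' l' ltac:(lia) c m ltac:(lra)).
    assert (Hcost_r := RInt_sq_shift_ge a m d ltac:(lra)).
    assert (Hcomb := cube_split_ineq (m - c) (d - m) (INR N + 1) ltac:(lra) ltac:(lra)
                       ltac:(generalize (pos_INR N); lra)).
    rewrite RInt_min_sqdist_Chasles with (m := m), S_INR.
    replace (d - c) with ((m - c) + (d - m)) by ring.
    lra.
Qed.

Lemma RInt_min_sqdist_le_uniform (k : nat) (c d : R) : c <= d ->
  exists pts, length pts = S k /\ forall b0 l, incl pts (b0 :: l) ->
    RInt (fun x => min_sqdist x b0 l) c d <= (d - c) ^ 3 / (12 * (INR k + 1) ^ 2).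
Proof.
  revert c d. induction k as [|k IH]; intros c d Hcd.
  - exists ((c + d) / 2 :: nil). split; [reflexivity|]. intros b0 l Hincl.
    eapply Rle_trans; [apply RInt_min_sqdist_le_point; [exact Hcd | apply Hincl; now left]|].
    rewrite RInt_sq_midpoint. simpl INR. right. field.
  - set (K := INR k + 1).
    assert (HK : 1 <= K) by (unfold K; generalize (pos_INR k); lra).
    set (h := (d - c) / (K + 1)).
    assert (Hh : 0 <= h) by (unfold h; apply Rdiv_le_0_compat; lra).
    assert (Hdc : d - c = (K + 1) * h) by (unfold h; field; lra).
    destruct (IH (c + h) d ltac:(nra)) as [pts [Hlen Hcost]].
    exists ((c + (c + h)) / 2 :: pts). split; [simpl; auto|].
    intros b0 l Hincl.
    assert (Hfirst := RInt_min_sqdist_le_point ((c + (c + h)) / 2) b0 l c (c + h)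
                        ltac:(lra) ltac:(apply Hincl; now left)).
    assert (Hrest := Hcost b0 l ltac:(intros y Hy; apply Hincl; now right)).
    rewrite RInt_sq_midpoint in Hfirst. fold K in Hrest.
    replace (d - (c + h)) with (K * h) in Hrest by lra.
    replace ((K * h) ^ 3 / (12 * K ^ 2)) with (K * h ^ 3 / 12) in Hrest by (field; lra).
    rewrite RInt_min_sqdist_Chasles with (m := c + h), S_INR. fold K. rewrite Hdc.
    replace (((K + 1) * h) ^ 3 / (12 * (K + 1) ^ 2)) with ((K + 1) * h ^ 3 / 12) by (field; lra).
    replace (c + h - c) with h in Hfirst by ring.
    lra.
Qed.

Lemma cond_cost_ge (alpha : list R) :
  1 / (12 * (INR (length alpha) + 2) ^ 2) <= cond_cost alpha.
Proof.
  unfold cond_cost, unif01_expect.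
  eapply Rle_trans; [|apply RInt_min_sqdist_ge; lra].
  rewrite length_app, plus_INR. simpl INR. right. field.
  generalize (pos_INR (length alpha)); lra.
Qed.

Lemma cond_cost_uniform (k : nat) :
  exists alpha, length alpha = S k /\ cond_cost alpha <= 1 / (12 * (INR k + 1) ^ 2).
Proof.
  destruct (RInt_min_sqdist_le_uniform k 0 1 ltac:(lra)) as [pts [Hlen Hcost]].
  exists pts. split; [exact Hlen|].
  unfold cond_cost, unif01_expect.
  eapply Rle_trans; [apply Hcost | right; f_equal; ring].
  intros y Hy. right. apply in_app_iff. now left.
Qed.

Lemma real_Glb_Rbar_spec (E : R -> Prop) (B v : R) :
  E v -> (forall w, E w -> B <= w) ->
  B <= real (Glb_Rbar E) /\ forall w, E w -> real (Glb_Rbar E) <= w.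
Proof.
  intros Hv HB. destruct (Glb_Rbar_correct E) as [Hlb Hglb].
  assert (H1 : Rbar_le B (Glb_Rbar E)) by (apply Hglb; intros w Hw; now apply HB).
  assert (H2 := Hlb v Hv).
  destruct (Glb_Rbar E) as [r | |]; simpl in *; [|tauto|tauto].
  split; [exact H1 | intros w Hw; exact (Hlb w Hw)].
Qed.

Lemma Vn_spec (n : nat) : (2 <= n)%nat ->
  1 / (12 * INR n ^ 2) <= Vn n /\
  forall alpha, (length alpha <= n - 2)%nat -> Vn n <= cond_cost alpha.
Proof.
  intros Hn. assert (Hn2 : 2 <= INR n) by (apply (le_INR 2); exact Hn).
  unfold Vn.
  destruct (real_Glb_Rbar_spec (fun v => exists alpha : list R,
              (length alpha <= n - length beta_list)%nat /\ v = cond_cost alpha)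
              (1 / (12 * INR n ^ 2)) (cond_cost nil)) as [Hlow Hup].
  - exists nil. split; [simpl; lia | reflexivity].
  - intros w [alpha [Halpha ->]]. simpl in Halpha.
    eapply Rle_trans; [|apply cond_cost_ge].
    assert (INR (length alpha) + 2 <= INR n)
      by (replace 2 with (INR 2) by reflexivity; rewrite <- plus_INR; apply le_INR; lia).
    assert (0 <= INR (length alpha)) by apply pos_INR.
    unfold Rdiv. rewrite !Rmult_1_l. apply Rinv_le_contravar; nra.
  - split; [exact Hlow|]. intros alpha Halpha. apply Hup. now exists alpha.
Qed.

Lemma Vn_scaled_bounds (n : nat) : (4 <= n)%nat ->
  1 / 12 <= INR n ^ 2 * Vn n <= 1 / 12 + / INR n.
Proof.
  intros Hn. assert (Hn4 : 4 <= INR n)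
    by (replace 4 with (INR 4) by (simpl; lra); now apply le_INR).
  destruct (Vn_spec n ltac:(lia)) as [Hlow Hup].
  destruct (cond_cost_uniform (n - 3)) as [alpha [Hlen Hcost]].
  replace (INR (n - 3) + 1) with (INR n - 2) in Hcost
    by (rewrite minus_INR by lia; simpl; lra).
  assert (HVn := Rle_trans _ _ _ (Hup alpha ltac:(lia)) Hcost).
  split.
  - replace (1 / 12) with (INR n ^ 2 * (1 / (12 * INR n ^ 2))) by (field; lra).
    apply Rmult_le_compat_l; [nra | exact Hlow].
  - eapply Rle_trans; [apply Rmult_le_compat_l; [nra | exact HVn]|].
    assert (Hgap : 1 / 12 + / INR n - INR n ^ 2 * (1 / (12 * (INR n - 2) ^ 2))
                   = 4 * (2 * INR n - 3) * (INR n - 4) / (12 * INR n * (INR n - 2) ^ 2))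
      by (field; lra).
    assert (0 <= 4 * (2 * INR n - 3) * (INR n - 4) / (12 * INR n * (INR n - 2) ^ 2))
      by (apply Rdiv_le_0_compat; nra).
    lra.
Qed.

Lemma is_lim_seq_inv_INR : is_lim_seq (fun n => / INR n) 0.
Proof. exact (is_lim_seq_inv INR p_infty is_lim_seq_INR ltac:(discriminate)). Qed.

Lemma Vn_scaled_lim : is_lim_seq (fun n => INR n ^ 2 * Vn n) (1 / 12).
Proof.
  apply is_lim_seq_le_le_loc with (u := fun _ => 1 / 12) (w := fun n => 1 / 12 + / INR n).
  - exists 4%nat. exact Vn_scaled_bounds.
  - apply is_lim_seq_const.
  - replace (Finite (1 / 12)) with (Finite (1 / 12 + 0)) by (f_equal; ring).
    apply is_lim_seq_plus'; [apply is_lim_seq_const | apply is_lim_seq_inv_INR].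
Qed.

Lemma Vn_lim : is_lim_seq Vn 0.
Proof.
  apply is_lim_seq_ext_loc with (u := fun n => (INR n ^ 2 * Vn n) * (/ INR n * / INR n)).
  - exists 1%nat. intros n Hn. assert (1 <= INR n) by (apply (le_INR 1); exact Hn).
    field. lra.
  - replace (Finite 0) with (Finite (1 / 12 * (0 * 0))) by (f_equal; ring).
    apply is_lim_seq_mult'; [exact Vn_scaled_lim|].
    apply is_lim_seq_mult'; apply is_lim_seq_inv_INR.
Qed.

Theorem theorem3p12 :
  ex_finite_lim_seq Vn /\
  is_lim_seq (fun n => (INR n) ^ 2 * (Vn n - real (Lim_seq Vn))) (1 / 12).
Proof.
  split; [exists 0; exact Vn_lim|].
  rewrite (is_lim_seq_unique _ _ Vn_lim). simpl real.
  apply is_lim_seq_ext with (u := fun n => INR n ^ 2 * Vn n); [intros n; f_equal; ring|].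
  exact Vn_scaled_lim.
Qed.
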